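(* Let $G$ be a finite group with $m^*(G) = |G|$. Then $G$ contains no non-trivial normal cyclic subgroups.
   Context: For $H \leq G$, $m_G(H) = |H|\,|C_G(H)|$ and $m^*(G) = \max\{ m_G(H) : H \leq G\}$. *)

From mathcomp Require Import all_boot all_fingroup.
Set Implicit Arguments. Unset Strict Implicit. Unset Printing Implicit Defensive.
Local Open Scope group_scope.

Definition mG (gT : finGroupType) (G H : {set gT}) : nat := #|H| * #|'C_G(H)|.

Definition mstar (gT : finGroupType) (G : {group gT}) : nat :=
  \max_(H : {group gT} | H \subset G) mG G H.

From mathcomp Require Import all_boot all_fingroup all_solvable.
Set Implicit Arguments.
Unset Strict Implicit.
Unset Printing Implicit Defensive.
Local Open Scope group_scope.

(* A normal cyclic subgroup N > 1 satisfies G / C_G(N) <= Aut N, and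
   |Aut N| = totient |N| < |N|; hence m_G(N) = |N| |C_G(N)| exceeds
   |G : C_G(N)| |C_G(N)| = |G|, so m*(G) > |G|. *)

Lemma totient_lt n : 1 < n -> totient n < n.
Proof.
move=> n_gt1; have n_gt0 := ltnW n_gt1.
rewrite totient_count_coprime big_ltn // /coprime gcdn0 gtn_eqF // add0n.
have sum1_lt : \sum_(1 <= d < n) 1 < n.
  by rewrite sum_nat_const_nat muln1 subn1 prednK.
by apply: leq_ltn_trans sum1_lt; apply: leq_sum => d _; apply: leq_b1.
Qed.

Section CentralizerIndex.

Variable gT : finGroupType.
Implicit Types G H N : {group gT}.

Lemma mG_le_mstar G H : H \subset G -> mG G H <= mstar G.
Proof. by move=> sHG; apply: (leq_bigmax_cond H). Qed.

Lemma index_cent_le_card_Aut G N : G \subset 'N(N) -> #|G : 'C_G(N)| <= #|Aut N|.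
Proof.
move=> nNG; have := subset_leq_card (Aut_conj_aut N G).
by rewrite card_morphim ker_conj_aut (setIidPr nNG) indexgI.
Qed.

Lemma index_cent_cyclic_lt G N :
  cyclic N -> N :!=: 1 -> G \subset 'N(N) -> #|G : 'C_G(N)| < #|N|.
Proof.
move=> cycN ntN nNG; apply: leq_ltn_trans (index_cent_le_card_Aut nNG) _.
by rewrite card_Aut_cyclic // totient_lt // ltnNge -trivg_card_le1.
Qed.

Lemma card_lt_mG_cyclic_normal G N :
  N <| G -> cyclic N -> N :!=: 1 -> #|G| < mG G N.
Proof.
move=> /andP[_ nNG] cycN ntN.
rewrite /mG -(Lagrange (subsetIl G 'C(N))) mulnC ltn_pmul2r ?cardG_gt0 //.
exact: index_cent_cyclic_lt.
Qed.

End CentralizerIndex.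

Theorem proposition6 (gT : finGroupType) (G : {group gT}) :
  mstar G = #|G| ->
  forall N : {group gT}, N <| G -> cyclic N -> N = 1%G.
Proof.
move=> mstarG N nNG cycN; apply/val_inj/eqP.
apply: contraTT (mG_le_mstar (normal_sub nNG)) => ntN.
by rewrite mstarG -ltnNge card_lt_mG_cyclic_normal.
Qed.
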